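(* Let $I$ be a nonempty open real interval, let $t\in\,]0,1[\,$, let $f,g:I\to\mathbb{R}$ be such that $f$ is positive everywhere on $I$ and $g/f$ is continuous and strictly monotone on $I$, and let $h:I\to\mathbb{R}$ be a continuous strictly monotone function. Then \[ \Big(\frac{g}{f}\Big)^{-1}\!\left(\frac{tg(x)+(1-t)g(y)}{tf(x)+(1-t)f(y)}\right)=h^{-1}\big(th(x)+(1-t)h(y)\big)\qquad\text{for all } x,y\in I \] holds if and only if there exists $p\in\mathbb{R}$ with $(t-\frac12)p=0$ such that $(f,g)\sim(S_p\circ h,C_p\circ h)$ on $I$.
   Context: For $p\in\mathbb{R}$, the functions $S_p,C_p:\mathbb{R}\to\mathbb{R}$ are defined by $S_p(x)=\sin(\sqrt{-p}\,x)$, $C_p(x)=\cos(\sqrt{-p}\,x)$ if $p<0$; $S_p(x)=x$, $C_p(x)=1$ if $p=0$; $S_p(x)=\sinh(\sqrt{p}\,x)$, $C_p(x)=\cosh(\sqrt{p}\,x)$ if $p>0$. Two pairs of functions $(f,g):I\to\mathbb{R}^2$ and $(u,v):I\to\mathbb{R}^2$ are called equivalent, written $(f,g)\sim(u,v)$, if there exist constants $a,b,c,d\in\mathbb{R}$ with $ad\neq cb$ such that $u=af+bg$ and $v=cf+dg$ on $I$. *)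

From Stdlib Require Import Reals ClassicalEpsilon.
From Coquelicot Require Import Coquelicot.
Open Scope R_scope.

Definition in_I (a b : Rbar) (x : R) : Prop := Rbar_lt a x /\ Rbar_lt x b.

Definition Sp (p x : R) : R :=
  match total_order_T p 0 with
  | inleft (left _) => sin (sqrt (- p) * x)
  | inleft (right _) => x
  | inright _ => sinh (sqrt p * x)
  end.

Definition Cp (p x : R) : R :=
  match total_order_T p 0 with
  | inleft (left _) => cos (sqrt (- p) * x)
  | inleft (right _) => 1
  | inright _ => cosh (sqrt p * x)
  end.

Definition continuous_on_set (I : R -> Prop) (phi : R -> R) : Prop :=
  forall x, I x -> continuity_pt phi x.

Definition strict_mono_on (I : R -> Prop) (phi : R -> R) : Prop :=
  (forall x y, I x -> I y -> x < y -> phi x < phi y) \/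
  (forall x y, I x -> I y -> x < y -> phi y < phi x).

(* The inverse of phi restricted to I: some z in I with phi z = y
   (unique when phi is injective on I and y is in phi(I)). *)
Definition inv_on (I : R -> Prop) (phi : R -> R) (y : R) : R :=
  epsilon (inhabits 0) (fun z => I z /\ phi z = y).

Definition pair_equiv_on (I : R -> Prop) (f g u v : R -> R) : Prop :=
  exists a b c d : R, a * d <> c * b /\
    forall x, I x -> u x = a * f x + b * g x /\ v x = c * f x + d * g x.

From Stdlib Require Import Reals Lra Psatz ClassicalEpsilon.
From Coquelicot Require Import Coquelicot.
Open Scope R_scope.

(* Substituting s = h x turns the identity into
     t G u + (1 - t) G v = P (t u + (1 - t) v) * (t F u + (1 - t) F v)
   on the open interval J = h(I), with F = f o h^-1, G = g o h^-1 and P = G / F continuous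
   and injective.  Regularity bootstraps: F is a rational expression in values of P, and
   averaging the identity over a small window writes P as a quotient of primitives of F and G,
   so P in C^k gives F, G in C^k, which gives P in C^(k+1).  With u = s + (1 - t) d and
   v = s - t d, the function d |-> G s * (t F u + (1 - t) F v) - F s * (t G u + (1 - t) G v)
   vanishes; its n-th derivative at d = 0 is mu_n * (G F^(n) - F G^(n)) (s), where mu_n is the
   n-th central moment of a Bernoulli(t) variable.  As mu_2 > 0, F'' = q F and G'' = q G, and
   the Wronskian W of F and G is constant and nonzero because P' = W / F^2 and P is injective.
   Then n = 3 gives mu_3 q W = 0, so q = 0 unless t = 1/2, and n = 4 gives mu_4 q' W = 0, so q
   is constant: F and G solve X'' = p X with (t - 1/2) p = 0, hence are independent combinations
   of S_p and C_p.  Conversely, S_p (u - w) = S_p u C_p w - C_p u S_p w together with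
   t S_p ((1 - t) d) + (1 - t) S_p (- t d) = 0 gives back the identity. *)

(** * Functions of class C^k at a point *)

Fixpoint Ck (k : nat) (f : R -> R) (x : R) : Prop :=
  match k with
  | O => continuity_pt f x
  | S k => locally x (ex_derive f) /\ Ck k (Derive f) x
  end.

Definition smooth_at (f : R -> R) (x : R) : Prop := forall k, Ck k f x.

Lemma locally_comp_continuity_pt (f : R -> R) (x : R) (P : R -> Prop) :
  continuity_pt f x -> locally (f x) P -> locally x (fun y => P (f y)).
Proof. intros Hc HP. exact (proj1 (continuity_pt_filterlim f x) Hc P HP). Qed.

Lemma continuity_pt_affine (a b x : R) : continuity_pt (fun y => a * y + b) x.
Proof.
  apply continuity_pt_plus; [apply continuity_pt_scal, continuity_pt_id |].
  apply continuity_pt_const. intros u v; reflexivity.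
Qed.

Lemma Ck_ext_loc k : forall f g x,
  locally x (fun y => f y = g y) -> Ck k f x -> Ck k g x.
Proof.
  induction k as [|k IH]; intros f g x Hfg Hf; simpl in *.
  - apply continuity_pt_filterlim, (continuous_ext_loc _ _ _ Hfg).
    now apply continuity_pt_filterlim.
  - destruct Hf as [Hd Hk]. split.
    + generalize (filter_and _ _ (locally_locally _ _ Hfg) Hd). apply filter_imp.
      intros y [Hy Hdy]. exact (ex_derive_ext_loc f g y Hy Hdy).
    + apply (IH (Derive f)); auto.
      apply filter_imp with (2 := locally_locally _ _ Hfg).
      intros y Hy. exact (Derive_ext_loc f g y Hy).
Qed.

Lemma Ck_S_Ck k : forall f x, Ck (S k) f x -> Ck k f x.
Proof.
  induction k as [|k IH]; intros f x [Hd Hk]; simpl.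
  - apply derivable_continuous_pt, ex_derive_Reals_0. exact (locally_singleton _ _ Hd).
  - split; auto.
Qed.

Lemma Ck_continuity_pt k f x : Ck k f x -> continuity_pt f x.
Proof. revert f; induction k as [|k IH]; intros f Hf; auto. apply IH, Ck_S_Ck, Hf. Qed.

Lemma Ck_const k : forall c x, Ck k (fun _ => c) x.
Proof.
  induction k as [|k IH]; intros c x; simpl.
  - apply continuity_pt_const. intros u v; reflexivity.
  - split; [apply filter_forall; intros; apply ex_derive_const |].
    apply (Ck_ext_loc k (fun _ => 0)); auto.
    apply filter_forall. intros y. symmetry. apply Derive_const.
Qed.

Lemma Ck_plus k : forall f g x, Ck k f x -> Ck k g x -> Ck k (fun y => f y + g y) x.
Proof.
  induction k as [|k IH]; intros f g x Hf Hg; simpl in *.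
  - now apply continuity_pt_plus.
  - destruct Hf as [Hf1 Hf2], Hg as [Hg1 Hg2].
    assert (Hfg := filter_and _ _ Hf1 Hg1). split.
    + apply filter_imp with (2 := Hfg). intros y [A B]. now apply (ex_derive_plus f g).
    + apply (Ck_ext_loc k (fun y => Derive f y + Derive g y)); auto.
      apply filter_imp with (2 := Hfg). intros y [A B]. symmetry. now apply (Derive_plus f g).
Qed.

Lemma Ck_scal k : forall c f x, Ck k f x -> Ck k (fun y => c * f y) x.
Proof.
  induction k as [|k IH]; intros c f x Hf; simpl in *.
  - now apply continuity_pt_scal.
  - destruct Hf as [Hf1 Hf2]. split.
    + apply filter_imp with (2 := Hf1). intros y A. now apply ex_derive_scal.
    + apply (Ck_ext_loc k (fun y => c * Derive f y)); auto.
      apply filter_forall. intros y. symmetry. apply Derive_scal.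
Qed.

Lemma Ck_minus k f g x : Ck k f x -> Ck k g x -> Ck k (fun y => f y - g y) x.
Proof.
  intros Hf Hg. apply (Ck_ext_loc k (fun y => f y + (-1) * g y)).
  - apply filter_forall; intros; ring.
  - apply Ck_plus, Ck_scal; auto.
Qed.

Lemma Ck_mult k : forall f g x, Ck k f x -> Ck k g x -> Ck k (fun y => f y * g y) x.
Proof.
  induction k as [|k IH]; intros f g x Hf Hg.
  - now apply continuity_pt_mult.
  - pose proof (Ck_S_Ck _ _ _ Hf) as Hf0. pose proof (Ck_S_Ck _ _ _ Hg) as Hg0.
    destruct Hf as [Hf1 Hf2], Hg as [Hg1 Hg2].
    assert (Hfg := filter_and _ _ Hf1 Hg1). split.
    + apply filter_imp with (2 := Hfg). intros y [A B]. now apply (ex_derive_mult f g).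
    + apply (Ck_ext_loc k (fun y => Derive f y * g y + f y * Derive g y)).
      * apply filter_imp with (2 := Hfg). intros y [A B]. symmetry. now apply (Derive_mult f g).
      * apply Ck_plus; apply IH; auto.
Qed.

Lemma Ck_inv k : forall f x, Ck k f x -> f x <> 0 -> Ck k (fun y => / f y) x.
Proof.
  induction k as [|k IH]; intros f x Hf Hfx.
  - now apply continuity_pt_inv.
  - assert (Hnz : locally x (fun y => f y <> 0)).
    { apply (locally_comp_continuity_pt f x (fun z => z <> 0)).
      - exact (Ck_continuity_pt _ _ _ Hf).
      - exact (open_neq 0 _ Hfx). }
    pose proof (Ck_S_Ck _ _ _ Hf) as Hf0. destruct Hf as [Hf1 Hf2].
    assert (Hl := filter_and _ _ Hf1 Hnz). split.
    + apply filter_imp with (2 := Hl). intros y [A B]. now apply (ex_derive_inv f).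
    + apply (Ck_ext_loc k (fun y => (-1) * Derive f y * (/ f y * / f y))).
      * apply filter_imp with (2 := Hl). intros y [A B].
        rewrite (Derive_inv f) by auto. field; auto.
      * apply Ck_mult; [apply Ck_scal; auto | apply Ck_mult; apply IH; auto].
Qed.

Lemma Derive_comp_affine (f : R -> R) a b y : ex_derive f (a * y + b) ->
  Derive (fun z => f (a * z + b)) y = a * Derive f (a * y + b).
Proof.
  intros Hf. rewrite (Derive_comp f (fun z => a * z + b)); auto.
  - f_equal. apply is_derive_unique. auto_derive; auto. ring.
  - auto_derive; auto.
Qed.

Lemma Ck_comp_affine k : forall f a b x,
  Ck k f (a * x + b) -> Ck k (fun y => f (a * y + b)) x.
Proof.
  induction k as [|k IH]; intros f a b x Hf.
  - exact (continuity_pt_comp _ f x (continuity_pt_affine a b x) Hf).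
  - destruct Hf as [Hf1 Hf2].
    pose proof (locally_comp_continuity_pt _ x _ (continuity_pt_affine a b x) Hf1) as Hl.
    split.
    + apply filter_imp with (2 := Hl). intros y A.
      apply (ex_derive_comp f (fun z => a * z + b)); auto. auto_derive; auto.
    + apply (Ck_ext_loc k (fun y => a * Derive f (a * y + b))).
      * apply filter_imp with (2 := Hl). intros y A. symmetry. now apply Derive_comp_affine.
      * apply Ck_scal, IH, Hf2.
Qed.

Lemma smooth_at_Derive f x : smooth_at f x -> smooth_at (Derive f) x.
Proof. intros Hf k. exact (proj2 (Hf (S k))). Qed.

Lemma smooth_at_locally_ex_derive f x : smooth_at f x -> locally x (ex_derive f).
Proof. intros Hf. exact (proj1 (Hf 1%nat)). Qed.

Lemma smooth_at_is_derive f x : smooth_at f x -> is_derive f x (Derive f x).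
Proof.
  intros Hf. apply Derive_correct, (locally_singleton _ _ (smooth_at_locally_ex_derive _ _ Hf)).
Qed.

Lemma smooth_at_plus f g x : smooth_at f x -> smooth_at g x -> smooth_at (fun y => f y + g y) x.
Proof. intros Hf Hg k. now apply Ck_plus. Qed.

Lemma smooth_at_scal c f x : smooth_at f x -> smooth_at (fun y => c * f y) x.
Proof. intros Hf k. now apply Ck_scal. Qed.

Lemma smooth_at_mult f g x : smooth_at f x -> smooth_at g x -> smooth_at (fun y => f y * g y) x.
Proof. intros Hf Hg k. now apply Ck_mult. Qed.

Lemma smooth_at_inv f x : smooth_at f x -> f x <> 0 -> smooth_at (fun y => / f y) x.
Proof. intros Hf Hx k. now apply Ck_inv. Qed.

Lemma smooth_at_comp_affine f a b x :
  smooth_at f (a * x + b) -> smooth_at (fun y => f (a * y + b)) x.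
Proof. intros Hf k. now apply Ck_comp_affine. Qed.

Lemma Derive_n_S_Derive f n x : Derive_n f (S n) x = Derive_n (Derive f) n x.
Proof. rewrite (Derive_n_comp f n 1). now rewrite Nat.add_1_r. Qed.

Lemma Derive_n_plus_smooth n : forall f g x, smooth_at f x -> smooth_at g x ->
  Derive_n (fun y => f y + g y) n x = Derive_n f n x + Derive_n g n x.
Proof.
  induction n as [|n IH]; intros f g x Hf Hg; [reflexivity |].
  rewrite !Derive_n_S_Derive, <- IH by (now apply smooth_at_Derive).
  apply Derive_n_ext_loc.
  generalize (filter_and _ _ (smooth_at_locally_ex_derive _ _ Hf)
                          (smooth_at_locally_ex_derive _ _ Hg)).
  apply filter_imp. intros y [A B]. now apply (Derive_plus f g).
Qed.

Lemma Derive_n_comp_affine_smooth n : forall f a b x, smooth_at f (a * x + b) ->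
  Derive_n (fun y => f (a * y + b)) n x = a ^ n * Derive_n f n (a * x + b).
Proof.
  induction n as [|n IH]; intros f a b x Hf; [simpl; ring |].
  rewrite !Derive_n_S_Derive.
  rewrite (Derive_n_ext_loc _ (fun y => a * Derive f (a * y + b))).
  - rewrite Derive_n_scal_l, IH by now apply smooth_at_Derive. simpl; ring.
  - apply filter_imp with (2 := locally_comp_continuity_pt _ x _ (continuity_pt_affine a b x)
                                  (smooth_at_locally_ex_derive _ _ Hf)).
    intros y A. now apply Derive_comp_affine.
Qed.

(** * Intervals and primitives *)

Definition is_interval (J : R -> Prop) : Prop :=
  forall u v w, J u -> J v -> u <= w <= v -> J w.

Lemma is_interval_between J a b z : is_interval J -> J a -> J b ->
  Rmin a b <= z <= Rmax a b -> J z.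
Proof.
  intros HJ Ha Hb Hz. destruct (Rle_dec a b).
  - rewrite Rmin_left, Rmax_right in Hz by lra. exact (HJ a b z Ha Hb Hz).
  - rewrite Rmin_right, Rmax_left in Hz by lra. exact (HJ b a z Hb Ha Hz).
Qed.

Lemma mean_between t u v : 0 <= t <= 1 -> Rmin u v <= t * u + (1 - t) * v <= Rmax u v.
Proof.
  intros Ht. destruct (Rle_dec u v).
  - rewrite Rmin_left, Rmax_right by lra. split; nra.
  - rewrite Rmin_right, Rmax_left by lra. split; nra.
Qed.

Lemma is_interval_mean J t u v : is_interval J -> 0 <= t <= 1 -> J u -> J v ->
  J (t * u + (1 - t) * v).
Proof. intros HJ Ht Hu Hv. now apply (is_interval_between J u v), mean_between. Qed.

Lemma interval_mvt J (f df : R -> R) a b : is_interval J ->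
  (forall x, J x -> is_derive f x (df x)) -> J a -> J b ->
  exists c, J c /\ f b - f a = df c * (b - a).
Proof.
  intros HJ Hd Ha Hb.
  assert (Hab : forall x, Rmin a b <= x <= Rmax a b -> J x)
    by (intros x; now apply is_interval_between).
  destruct (MVT_gen f a b df) as [c [Hc E]].
  - intros x Hx. apply Hd, Hab. lra.
  - intros x Hx. apply derivable_continuous_pt, ex_derive_Reals_0.
    eexists. apply Hd, Hab, Hx.
  - exists c. auto.
Qed.

Lemma interval_const_of_derive_0 J f a b : is_interval J ->
  (forall x, J x -> is_derive f x 0) -> J a -> J b -> f a = f b.
Proof.
  intros HJ Hd Ha Hb. destruct (interval_mvt J f (fun _ => 0) a b HJ Hd Ha Hb) as [c [_ E]]. lra.
Qed.

Section PrimitiveOnInterval.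

Variables (J : R -> Prop) (X : R -> R).
Hypothesis J_open : open J.
Hypothesis J_interval : is_interval J.
Hypothesis X_cont : forall z, J z -> continuity_pt X z.

Lemma ex_RInt_interval a b : J a -> J b -> ex_RInt X a b.
Proof.
  intros Ha Hb. apply (@ex_RInt_continuous R_CompleteNormedModule).
  intros z Hz. apply continuity_pt_filterlim, X_cont. now apply (is_interval_between J a b).
Qed.

Lemma is_derive_RInt_interval c y : J c -> J y -> is_derive (RInt X c) y (X y).
Proof.
  intros Hc Hy. apply is_derive_RInt with (a := c).
  - apply filter_imp with (2 := J_open y Hy). intros b Hb.
    now apply (RInt_correct (V := R_CompleteNormedModule)), ex_RInt_interval.
  - now apply continuity_pt_filterlim, X_cont.
Qed.

Lemma Ck_RInt_interval k c y : J c -> J y -> Ck k X y -> Ck (S k) (RInt X c) y.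
Proof.
  intros Hc Hy Hk. split.
  - apply filter_imp with (2 := J_open y Hy). intros b Hb.
    eexists. now apply is_derive_RInt_interval.
  - apply (Ck_ext_loc k X); auto.
    apply filter_imp with (2 := J_open y Hy). intros b Hb.
    symmetry. now apply is_derive_unique, is_derive_RInt_interval.
Qed.

Lemma is_RInt_comp_affine_interval c a s dl : J c -> J s -> J (a * dl + s) -> a <> 0 ->
  is_RInt (fun d => X (a * d + s)) 0 dl ((RInt X c (a * dl + s) - RInt X c s) / a).
Proof.
  intros Hc Hs Hd Ha.
  assert (Hseg : is_RInt X (a * 0 + s) (a * dl + s) (RInt X s (a * dl + s))).
  { rewrite Rmult_0_r, Rplus_0_l.
    now apply (RInt_correct (V := R_CompleteNormedModule)), ex_RInt_interval. }
  pose proof (is_RInt_scal _ _ _ (/ a) _ (is_RInt_comp_lin X a s 0 dl _ Hseg)) as E.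
  replace ((RInt X c (a * dl + s) - RInt X c s) / a) with (scal (/ a) (RInt X s (a * dl + s))).
  - refine (is_RInt_ext _ _ _ _ _ _ E). intros d _.
    unfold scal; simpl; unfold mult; simpl. field; auto.
  - rewrite <- (RInt_Chasles X c s (a * dl + s)) by now apply ex_RInt_interval.
    unfold scal, plus; simpl; unfold mult; simpl. field; auto.
Qed.

End PrimitiveOnInterval.

Lemma is_interval_affine_segment J a s dl d : is_interval J -> J s -> J (a * dl + s) ->
  0 <= d <= dl -> J (a * d + s).
Proof.
  intros HJ Hs Hd Hdd. apply (is_interval_between J s (a * dl + s)); auto.
  destruct (Rle_dec 0 a).
  - rewrite Rmin_left, Rmax_right by nra. split; nra.
  - rewrite Rmin_right, Rmax_left by nra. split; nra.
Qed.

(** * Two-point averages *)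

Definition weighted_pair (t : R) (X : R -> R) (s d : R) : R :=
  t * X ((1 - t) * d + s) + (1 - t) * X (- t * d + s).

Definition bernoulli_central_moment (t : R) (n : nat) : R :=
  t * (1 - t) ^ n + (1 - t) * (- t) ^ n.

Lemma Derive_n_weighted_pair t X s n : smooth_at X s ->
  Derive_n (weighted_pair t X s) n 0 = bernoulli_central_moment t n * Derive_n X n s.
Proof.
  intros HX.
  assert (Hs : forall a, smooth_at X (a * 0 + s)) by (intros a; now rewrite Rmult_0_r, Rplus_0_l).
  unfold weighted_pair, bernoulli_central_moment.
  rewrite Derive_n_plus_smooth by (apply smooth_at_scal, smooth_at_comp_affine, Hs).
  rewrite !Derive_n_scal_l, !Derive_n_comp_affine_smooth by apply Hs.
  rewrite !Rmult_0_r, !Rplus_0_l. ring.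
Qed.

Lemma smooth_at_weighted_pair t X s : smooth_at X s -> smooth_at (weighted_pair t X s) 0.
Proof.
  intros HX.
  assert (Hs : forall a, smooth_at X (a * 0 + s)) by (intros a; now rewrite Rmult_0_r, Rplus_0_l).
  apply smooth_at_plus; apply smooth_at_scal, smooth_at_comp_affine, Hs.
Qed.

Section WeightedPairIntegral.

Variables (J : R -> Prop) (t : R).
Hypothesis J_open : open J.
Hypothesis J_interval : is_interval J.
Hypothesis t_range : 0 < t < 1.

Lemma is_RInt_weighted_pair X c s dl : (forall z, J z -> continuity_pt X z) ->
  J c -> J s -> J ((1 - t) * dl + s) -> J (- t * dl + s) ->
  is_RInt (weighted_pair t X s) 0 dl
    (t / (1 - t) * (RInt X c ((1 - t) * dl + s) - RInt X c s)
     + (1 - t) / (- t) * (RInt X c (- t * dl + s) - RInt X c s)).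
Proof.
  intros HX Hc Hs H1 H2.
  pose proof (is_RInt_comp_affine_interval J X J_interval HX c (1 - t) s dl Hc Hs H1
                ltac:(lra)) as E1.
  pose proof (is_RInt_comp_affine_interval J X J_interval HX c (- t) s dl Hc Hs H2
                ltac:(lra)) as E2.
  replace (t / (1 - t) * (RInt X c ((1 - t) * dl + s) - RInt X c s)
           + (1 - t) / (- t) * (RInt X c (- t * dl + s) - RInt X c s))
    with (plus (scal t ((RInt X c ((1 - t) * dl + s) - RInt X c s) / (1 - t)))
               (scal (1 - t) ((RInt X c (- t * dl + s) - RInt X c s) / - t)))
    by (unfold plus, scal; simpl; unfold mult; simpl; field; lra).
  now apply (@is_RInt_plus R_NormedModule); apply (@is_RInt_scal R_NormedModule).
Qed.

Lemma Ck_RInt_weighted_pair X k dl s0 : (forall z, J z -> Ck k X z) -> J s0 ->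
  locally s0 (fun s => J s /\ J ((1 - t) * dl + s) /\ J (- t * dl + s)) ->
  Ck (S k) (fun s => RInt (weighted_pair t X s) 0 dl) s0.
Proof.
  intros HX Hs0 Hloc.
  assert (HXc : forall z, J z -> continuity_pt X z)
    by (intros z Hz; exact (Ck_continuity_pt _ _ _ (HX z Hz))).
  assert (Hprim : forall c, J (c + s0) -> Ck (S k) (fun s => RInt X s0 (c + s)) s0).
  { intros c Hc. apply (Ck_ext_loc _ (fun s => RInt X s0 (1 * s + c))).
    - apply filter_forall. intros s. f_equal. ring.
    - apply Ck_comp_affine, (Ck_RInt_interval J); auto; rewrite Rmult_1_l, Rplus_comm; auto. }
  assert (Hprim0 : Ck (S k) (RInt X s0) s0) by (apply (Ck_RInt_interval J); auto).
  destruct (locally_singleton _ _ Hloc) as [_ [H1 H2]].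
  apply (Ck_ext_loc _ (fun s => t / (1 - t) * (RInt X s0 ((1 - t) * dl + s) - RInt X s0 s)
                          + (1 - t) / (- t) * (RInt X s0 (- t * dl + s) - RInt X s0 s))).
  - apply filter_imp with (2 := Hloc). intros s [Hs [Hs1 Hs2]].
    symmetry. now apply is_RInt_unique, is_RInt_weighted_pair.
  - apply Ck_plus; apply Ck_scal, Ck_minus; auto.
Qed.

Lemma RInt_weighted_pair_pos X s dl : 0 < dl -> (forall z, J z -> continuity_pt X z) ->
  (forall z, J z -> 0 < X z) -> J s -> J ((1 - t) * dl + s) -> J (- t * dl + s) ->
  0 < RInt (weighted_pair t X s) 0 dl.
Proof.
  intros Hdl HXc HXp Hs H1 H2.
  assert (Hin : forall d, 0 <= d <= dl -> J ((1 - t) * d + s) /\ J (- t * d + s))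
    by (intros d Hd; split; now apply (is_interval_affine_segment J _ s dl)).
  apply RInt_gt_0; auto.
  - intros d Hd. destruct (Hin d ltac:(lra)) as [A B].
    pose proof (HXp _ A). pose proof (HXp _ B). unfold weighted_pair. nra.
  - intros d Hd. destruct (Hin d Hd) as [A B].
    apply continuity_pt_filterlim, continuity_pt_plus; apply continuity_pt_scal;
      apply (continuity_pt_comp _ X d (continuity_pt_affine _ _ d)), HXc; assumption.
Qed.

End WeightedPairIntegral.

(** * The equation X'' = p X *)

Lemma cosh_sqr_minus_sinh_sqr x : cosh x * cosh x - sinh x * sinh x = 1.
Proof.
  unfold cosh, sinh. rewrite <- (exp_0), <- (Rplus_opp_r x), exp_plus. field.
Qed.

Lemma sinh_minus x y : sinh (x - y) = sinh x * cosh y - cosh x * sinh y.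
Proof.
  unfold sinh, cosh.
  replace (x - y) with (x + - y) by ring. replace (- (x + - y)) with (- x + y) by ring.
  rewrite !exp_plus. field.
Qed.

Definition Sp_rate (p : R) : R :=
  match total_order_T p 0 with
  | inleft (left _) => sqrt (- p)
  | inleft (right _) => 1
  | inright _ => sqrt p
  end.

Definition Cp_rate (p : R) : R :=
  match total_order_T p 0 with
  | inleft (left _) => - sqrt (- p)
  | inleft (right _) => 0
  | inright _ => sqrt p
  end.

Lemma is_derive_Sp p x : is_derive (Sp p) x (Sp_rate p * Cp p x).
Proof.
  unfold Sp, Cp, Sp_rate. destruct (total_order_T p 0) as [[H|H]|H].
  - auto_derive; auto. ring.
  - auto_derive; auto. ring.
  - unfold sinh, cosh. auto_derive; auto. field.
Qed.

Lemma is_derive_Cp p x : is_derive (Cp p) x (Cp_rate p * Sp p x).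
Proof.
  unfold Sp, Cp, Cp_rate. destruct (total_order_T p 0) as [[H|H]|H].
  - auto_derive; auto. ring.
  - auto_derive; auto. ring.
  - unfold sinh, cosh. auto_derive; auto. field.
Qed.

Lemma Sp_rate_Cp_rate p : Sp_rate p * Cp_rate p = p.
Proof.
  unfold Sp_rate, Cp_rate. destruct (total_order_T p 0) as [[H|H]|H].
  - replace (sqrt (- p) * - sqrt (- p)) with (- (sqrt (- p) * sqrt (- p))) by ring.
    rewrite sqrt_sqrt; lra.
  - lra.
  - rewrite sqrt_sqrt; lra.
Qed.

Lemma Sp_rate_pos p : 0 < Sp_rate p.
Proof.
  unfold Sp_rate. destruct (total_order_T p 0) as [[H|H]|H]; try lra; apply sqrt_lt_R0; lra.
Qed.

Lemma Sp_Cp_wronskian p x :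
  Sp p x * (Cp_rate p * Sp p x) - Sp_rate p * Cp p x * Cp p x = - Sp_rate p.
Proof.
  unfold Sp_rate, Cp_rate, Sp, Cp. destruct (total_order_T p 0) as [[H|H]|H].
  - pose proof (sin2_cos2 (sqrt (- p) * x)) as E. unfold Rsqr in E.
    transitivity (- sqrt (- p) * (sin (sqrt (- p) * x) * sin (sqrt (- p) * x)
                                  + cos (sqrt (- p) * x) * cos (sqrt (- p) * x))); [ring |].
    rewrite E. ring.
  - ring.
  - pose proof (cosh_sqr_minus_sinh_sqr (sqrt p * x)) as E.
    transitivity (- sqrt p * (cosh (sqrt p * x) * cosh (sqrt p * x)
                              - sinh (sqrt p * x) * sinh (sqrt p * x))); [ring |].
    rewrite E. ring.
Qed.

Lemma Sp_minus p u v : Sp p (u - v) = Sp p u * Cp p v - Cp p u * Sp p v.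
Proof.
  unfold Sp, Cp. destruct (total_order_T p 0) as [[H|H]|H].
  - rewrite Rmult_minus_distr_l. apply sin_minus.
  - ring.
  - rewrite Rmult_minus_distr_l. apply sinh_minus.
Qed.

Lemma Sp_opp p u : Sp p (- u) = - Sp p u.
Proof.
  unfold Sp. destruct (total_order_T p 0) as [[H|H]|H].
  - rewrite <- sin_neg. f_equal. ring.
  - reflexivity.
  - replace (sqrt p * - u) with (- (sqrt p * u)) by ring. unfold sinh.
    rewrite Ropp_involutive. field.
Qed.

Lemma Sp_0 u : Sp 0 u = u.
Proof. unfold Sp. destruct (total_order_T 0 0) as [[H|H]|H]; auto; lra. Qed.

Lemma weighted_pair_Sp t p u : (t - 1/2) * p = 0 -> weighted_pair t (Sp p) 0 u = 0.
Proof.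
  intros Htp. unfold weighted_pair. rewrite !Rplus_0_r.
  destruct (Req_dec p 0) as [Hp|Hp].
  - subst p. rewrite !Sp_0. ring.
  - assert (Ht : t = 1/2) by (apply Rmult_integral in Htp; destruct Htp; [lra | contradiction]).
    subst t. replace (- (1/2) * u) with (- ((1 - 1/2) * u)) by lra. rewrite Sp_opp. lra.
Qed.

Lemma interval_gronwall_zero J (E dE : R -> R) c s0 : is_interval J ->
  (forall y, J y -> is_derive E y (dE y)) -> (forall y, J y -> Rabs (dE y) <= c * E y) ->
  (forall y, J y -> 0 <= E y) -> J s0 -> E s0 = 0 -> forall y, J y -> E y = 0.
Proof.
  intros HJ HdE Hbound Hpos Hs0 E0 y Hy.
  (* [E z * exp (- sg * c * z)] is nonincreasing along the way from [s0] to [y]. *)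
  set (sg := if Rle_dec s0 y then 1 else -1).
  assert (Hsg : sg * sg = 1 /\ Rabs sg = 1 /\ 0 <= sg * (y - s0)).
  { unfold sg; destruct (Rle_dec s0 y); [rewrite Rabs_R1 | rewrite Rabs_left by lra];
      repeat split; lra. }
  set (g := fun z => E z * exp (- sg * c * z)).
  assert (Hg : forall z, J z -> is_derive g z ((dE z - sg * c * E z) * exp (- sg * c * z))).
  { intros z Hz. unfold g. auto_derive.
    - exists (dE z). apply HdE, Hz.
    - rewrite (is_derive_unique _ z (dE z)) by apply HdE, Hz. ring. }
  destruct (interval_mvt J g _ s0 y HJ Hg Hs0 Hy) as [xi [Hxi Exi]].
  assert (Hslope : (dE xi - sg * c * E xi) * (y - s0) <= 0).
  { destruct Hsg as [Hsq [Habs Hside]].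
    assert (Hdir : sg * dE xi <= c * E xi).
    { eapply Rle_trans; [apply Rle_abs |].
      rewrite Rabs_mult, Habs, Rmult_1_l. apply Hbound, Hxi. }
    replace ((dE xi - sg * c * E xi) * (y - s0))
      with ((sg * dE xi - c * E xi) * (sg * (y - s0)))
      by (transitivity (sg * sg * dE xi * (y - s0) - sg * c * E xi * (y - s0));
          [ring | rewrite Hsq; ring]).
    apply Rmult_le_0_r; lra. }
  assert (Hgy : g y <= 0).
  { unfold g at 2 in Exi. rewrite E0, Rmult_0_l in Exi.
    pose proof (exp_pos (- sg * c * xi)). nra. }
  pose proof (Hpos y Hy). pose proof (exp_pos (- sg * c * y)). unfold g in Hgy. nra.
Qed.

Lemma second_order_ode_unique J (U U1 : R -> R) p s0 : is_interval J ->
  (forall x, J x -> is_derive U x (U1 x)) -> (forall x, J x -> is_derive U1 x (p * U x)) ->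
  J s0 -> U s0 = 0 -> U1 s0 = 0 -> forall x, J x -> U x = 0 /\ U1 x = 0.
Proof.
  intros HJ HU HU1 Hs0 E0 E1 x Hx.
  assert (Henergy : U1 x * U1 x + U x * U x = 0).
  { apply (interval_gronwall_zero J (fun y => U1 y * U1 y + U y * U y)
             (fun y => 2 * (p + 1) * U y * U1 y) (Rabs (p + 1)) s0); auto.
    - intros y Hy. pose proof (HU y Hy) as DU. pose proof (HU1 y Hy) as DU1.
      auto_derive.
      + repeat split; eexists; eassumption.
      + rewrite (is_derive_unique _ y (p * U y)) by assumption.
        rewrite (is_derive_unique _ y (U1 y)) by assumption. ring.
    - intros y _.
      replace (2 * (p + 1) * U y * U1 y) with ((p + 1) * (2 * U y * U1 y)) by ring.
      rewrite Rabs_mult. apply Rmult_le_compat_l; [apply Rabs_pos |].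
      pose proof (Rle_0_sqr (U y - U1 y)). pose proof (Rle_0_sqr (U y + U1 y)).
      unfold Rsqr in *. apply Rabs_le. split; nra.
    - intros y _. nra.
    - rewrite E0, E1. ring. }
  split; nra.
Qed.

Lemma second_order_ode_solution J (X : R -> R) p s0 : is_interval J -> J s0 ->
  (forall s, J s -> smooth_at X s) -> (forall s, J s -> Derive_n X 2 s = p * X s) ->
  exists al be, forall s, J s ->
    X s = al * Sp p s + be * Cp p s /\
    Derive X s = al * Sp_rate p * Cp p s + be * Cp_rate p * Sp p s.
Proof.
  intros HJ Hs0 HX HX2.
  set (k := Sp_rate p). set (m := Cp_rate p).
  set (S0 := Sp p s0). set (C0 := Cp p s0). set (X0 := X s0). set (X1 := Derive X s0).
  set (D := S0 * (m * S0) - k * C0 * C0).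
  assert (HD : D <> 0)
    by (unfold D, S0, C0, k, m; rewrite Sp_Cp_wronskian; pose proof (Sp_rate_pos p); lra).
  (* Cramer's rule for the initial conditions at [s0]. *)
  exists ((X0 * m * S0 - C0 * X1) / D), ((S0 * X1 - k * C0 * X0) / D).
  intros s Hs.
  set (al := (X0 * m * S0 - C0 * X1) / D). set (be := (S0 * X1 - k * C0 * X0) / D).
  assert (HXd : forall y, J y -> is_derive X y (Derive X y))
    by (intros y Hy; exact (smooth_at_is_derive _ _ (HX y Hy))).
  assert (HXdd : forall y, J y -> is_derive (Derive X) y (p * X y)).
  { intros y Hy. rewrite <- HX2 by exact Hy.
    exact (smooth_at_is_derive _ _ (smooth_at_Derive _ _ (HX y Hy))). }
  destruct (second_order_ode_unique J (fun y => X y - al * Sp p y - be * Cp p y)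
              (fun y => Derive X y - al * (k * Cp p y) - be * (m * Sp p y)) p s0 HJ)
    with (x := s) as [E0 E1]; auto.
  - intros y Hy.
    apply (is_derive_minus (fun y => X y - al * Sp p y)); [apply (is_derive_minus X) |];
      auto using is_derive_scal, is_derive_Sp, is_derive_Cp.
  - intros y Hy.
    replace (p * (X y - al * Sp p y - be * Cp p y))
      with (p * X y - al * (k * (m * Sp p y)) - be * (m * (k * Cp p y)))
      by (rewrite <- (Sp_rate_Cp_rate p); fold k m; ring).
    apply (is_derive_minus (fun y => Derive X y - al * (k * Cp p y)));
      [apply (is_derive_minus (Derive X)) |];
      auto using is_derive_scal, is_derive_Sp, is_derive_Cp.
  - fold S0 C0 X0. unfold al, be, D in *. field. auto.
  - fold S0 C0 X1. unfold al, be, D in *. field. auto.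
  - split; lra.
Qed.

(** * The functional equation on h(I) *)

Definition wronskian (f g : R -> R) (x : R) : R := f x * Derive g x - Derive f x * g x.

Section ReducedEquation.

Variables (J : R -> Prop) (t : R) (F G P : R -> R).
Hypothesis J_open : open J.
Hypothesis J_interval : is_interval J.
Hypothesis t_range : 0 < t < 1.
Hypothesis F_pos : forall s, J s -> 0 < F s.
Hypothesis G_eq : forall s, J s -> G s = P s * F s.
Hypothesis P_cont : forall s, J s -> continuity_pt P s.
Hypothesis P_inj : forall u v, J u -> J v -> P u = P v -> u = v.
Hypothesis mean_eq : forall u v, J u -> J v ->
  t * G u + (1 - t) * G v = P (t * u + (1 - t) * v) * (t * F u + (1 - t) * F v).

Lemma J_mean u v : J u -> J v -> J (t * u + (1 - t) * v).
Proof. apply is_interval_mean; auto; lra. Qed.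

Lemma J_other_point s : J s -> exists v, J v /\ v <> s.
Proof.
  intros Hs. destruct (J_open s Hs) as [eps Heps].
  exists (s + eps / 2). split; [| pose proof (cond_pos eps); lra].
  apply Heps. change (Rabs (s + eps / 2 - s) < eps).
  rewrite Rabs_right; pose proof (cond_pos eps); lra.
Qed.

Lemma F_two_point_formula u v : J u -> J v -> u <> v ->
  F u = (1 - t) * F v * (P (t * u + (1 - t) * v) - P v) * / (t * (P u - P (t * u + (1 - t) * v))).
Proof.
  intros Hu Hv Huv. set (w := t * u + (1 - t) * v).
  assert (Hw : J w) by now apply J_mean.
  assert (Hne : P u - P w <> 0).
  { intros E. assert (u = w) by (apply P_inj; auto; lra). unfold w in *. apply Huv. nra. }
  pose proof (mean_eq u v Hu Hv) as E. fold w in E. rewrite (G_eq u Hu), (G_eq v Hv) in E.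
  assert (K : t * F u * (P u - P w) = (1 - t) * F v * (P w - P v)) by nra.
  rewrite <- K. field. split; lra.
Qed.

Lemma Ck_F_of_Ck_P k : (forall s, J s -> Ck k P s) -> forall s, J s -> Ck k F s.
Proof.
  intros HP s Hs. destruct (J_other_point s Hs) as [v [Hv Hvs]].
  assert (Hl : locally s (fun u => J u /\ u <> v))
    by exact (filter_and _ _ (J_open s Hs) (open_neq v s (not_eq_sym Hvs))).
  assert (HPw : Ck k (fun u => P (t * u + (1 - t) * v)) s)
    by (apply Ck_comp_affine, HP, J_mean; auto).
  apply (Ck_ext_loc k (fun u => (1 - t) * F v * (P (t * u + (1 - t) * v) - P v)
                               * / (t * (P u - P (t * u + (1 - t) * v))))).
  - apply filter_imp with (2 := Hl). intros u [Hu Huv]. symmetry. now apply F_two_point_formula.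
  - apply Ck_mult; [apply Ck_scal, Ck_minus; auto using Ck_const |].
    apply Ck_inv; [apply Ck_scal, Ck_minus; auto |].
    intros E. apply Rmult_integral in E. destruct E as [E | E]; [lra |].
    assert (s = t * s + (1 - t) * v) by (apply P_inj; auto; [apply J_mean; auto | lra]).
    apply Hvs. nra.
Qed.

Lemma Ck_G_of_Ck_P k : (forall s, J s -> Ck k P s) -> forall s, J s -> Ck k G s.
Proof.
  intros HP s Hs. apply (Ck_ext_loc k (fun y => P y * F y)).
  - apply filter_imp with (2 := J_open s Hs). intros y Hy. symmetry. now apply G_eq.
  - apply Ck_mult; [| apply (Ck_F_of_Ck_P k)]; auto.
Qed.

Lemma weighted_pair_G_eq s d : J ((1 - t) * d + s) -> J (- t * d + s) ->
  weighted_pair t G s d = P s * weighted_pair t F s d.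
Proof.
  intros H1 H2. unfold weighted_pair. rewrite mean_eq by assumption.
  f_equal. f_equal. ring.
Qed.

Lemma Ck_S_P_of_Ck_F_G k : (forall s, J s -> Ck k F s) -> (forall s, J s -> Ck k G s) ->
  forall s0, J s0 -> Ck (S k) P s0.
Proof.
  intros HF HG s0 Hs0.
  assert (Hcont : forall X, (forall z, J z -> Ck k X z) -> forall z, J z -> continuity_pt X z)
    by (intros X HX z Hz; exact (Ck_continuity_pt _ _ _ (HX z Hz))).
  destruct (J_open s0 Hs0) as [eps Heps]. pose proof (cond_pos eps) as Heps0.
  set (dl := eps / 2). assert (Hdl : 0 < dl) by (unfold dl; lra).
  assert (Hwin : locally s0 (fun s => J s /\ J ((1 - t) * dl + s) /\ J (- t * dl + s))).
  { exists (mkposreal (eps / 2) ltac:(lra)). intros s Hs. change (Rabs (s - s0) < eps / 2) in Hs.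
    apply Rabs_def2 in Hs.
    repeat split; apply Heps;
      [change (Rabs (s - s0) < eps) | change (Rabs ((1 - t) * dl + s - s0) < eps)
      | change (Rabs (- t * dl + s - s0) < eps)]; apply Rabs_def1; unfold dl; nra. }
  (* Averaging the equation over the window gives [P] as a quotient of C^(k+1) functions. *)
  assert (Havg : forall s, J s -> J ((1 - t) * dl + s) -> J (- t * dl + s) ->
            RInt (weighted_pair t G s) 0 dl = P s * RInt (weighted_pair t F s) 0 dl
            /\ 0 < RInt (weighted_pair t F s) 0 dl).
  { intros s Hs H1 H2. split.
    - rewrite (RInt_ext _ (fun d => P s * weighted_pair t F s d)).
      + apply (RInt_scal (V := R_CompleteNormedModule)).
        eexists. apply (is_RInt_weighted_pair J t J_interval t_range F s); auto.
      + intros d Hd. rewrite Rmin_left, Rmax_right in Hd by lra.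
        apply weighted_pair_G_eq; apply (is_interval_affine_segment J _ s dl); auto; lra.
    - apply (RInt_weighted_pair_pos J t J_interval t_range); auto. }
  apply (Ck_ext_loc _ (fun s => RInt (weighted_pair t G s) 0 dl
                               * / RInt (weighted_pair t F s) 0 dl)).
  - apply filter_imp with (2 := Hwin). intros s [Hs [H1 H2]].
    destruct (Havg s Hs H1 H2) as [E Hpos]. rewrite E. field. lra.
  - destruct (locally_singleton _ _ Hwin) as [_ [H1 H2]].
    destruct (Havg s0 Hs0 H1 H2) as [_ Hpos].
    apply Ck_mult; [| apply Ck_inv; [| lra]];
      apply (Ck_RInt_weighted_pair J t J_open J_interval t_range); auto.
Qed.

Lemma smooth_F_G_P s : J s -> smooth_at F s /\ smooth_at G s /\ smooth_at P s.
Proof.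
  assert (HP : forall k s, J s -> Ck k P s).
  { induction k as [|k IH]; [exact P_cont |].
    apply Ck_S_P_of_Ck_F_G; [apply Ck_F_of_Ck_P | apply Ck_G_of_Ck_P]; exact IH. }
  intros Hs. repeat split; intros k.
  - apply (Ck_F_of_Ck_P k); auto.
  - apply (Ck_G_of_Ck_P k); auto.
  - auto.
Qed.

Lemma central_moment_relation n s : J s ->
  bernoulli_central_moment t n * (G s * Derive_n F n s - F s * Derive_n G n s) = 0.
Proof.
  intros Hs. destruct (smooth_F_G_P s Hs) as [SF [SG _]].
  assert (Hzero : Derive_n (fun d => G s * weighted_pair t F s d
                                    + (- F s) * weighted_pair t G s d) n 0 = 0).
  { rewrite (Derive_n_ext_loc _ (fun _ => 0)); [destruct n; [reflexivity | apply Derive_n_const] |].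
    destruct (J_open s Hs) as [eps Heps].
    exists eps. intros d Hd. change (Rabs (d - 0) < eps) in Hd. rewrite Rminus_0_r in Hd.
    assert (Hin : forall a, Rabs a <= 1 -> J (a * d + s)).
    { intros a Ha. apply Heps. change (Rabs (a * d + s - s) < eps).
      replace (a * d + s - s) with (a * d) by ring. rewrite Rabs_mult.
      pose proof (Rabs_pos a). pose proof (Rabs_pos d). nra. }
    rewrite weighted_pair_G_eq, (G_eq s Hs); [ring | apply Hin ..].
    - rewrite Rabs_pos_eq; lra.
    - rewrite Rabs_Ropp, Rabs_pos_eq; lra. }
  rewrite Derive_n_plus_smooth in Hzero
    by (apply smooth_at_scal, smooth_at_weighted_pair; assumption).
  rewrite !Derive_n_scal_l, !Derive_n_weighted_pair in Hzero by assumption.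
  rewrite <- Hzero. ring.
Qed.

Lemma smooth_F s : J s -> smooth_at F s.
Proof. intros Hs. exact (proj1 (smooth_F_G_P s Hs)). Qed.

Lemma smooth_G s : J s -> smooth_at G s.
Proof. intros Hs. exact (proj1 (proj2 (smooth_F_G_P s Hs))). Qed.

Let q (s : R) : R := Derive_n F 2 s / F s.

Lemma smooth_q s : J s -> smooth_at q s.
Proof.
  intros Hs. apply smooth_at_mult.
  - exact (smooth_at_Derive _ _ (smooth_at_Derive _ _ (smooth_F s Hs))).
  - apply smooth_at_inv; [apply smooth_F | pose proof (F_pos s Hs); lra]; auto.
Qed.

Lemma second_derivatives_proportional s : J s ->
  Derive_n F 2 s = q s * F s /\ Derive_n G 2 s = q s * G s.
Proof.
  intros Hs. pose proof (F_pos s Hs). pose proof (central_moment_relation 2 s Hs) as E.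
  assert (Hm : bernoulli_central_moment t 2 <> 0)
    by (unfold bernoulli_central_moment; simpl; nra).
  apply Rmult_integral in E. destruct E as [E | E]; [contradiction |].
  unfold q. split; [field; lra |].
  apply (Rmult_eq_reg_l (F s)); [| lra].
  replace (F s * (Derive_n F 2 s / F s * G s)) with (G s * Derive_n F 2 s) by (field; lra). lra.
Qed.

Lemma is_derive_P s : J s -> is_derive P s (wronskian F G s / F s ^ 2).
Proof.
  intros Hs. pose proof (F_pos s Hs).
  apply (is_derive_ext_loc (fun z => G z * / F z)).
  - apply filter_imp with (2 := J_open s Hs). intros z Hz.
    change (G z * / F z = P z). rewrite G_eq by exact Hz. pose proof (F_pos z Hz). field. lra.
  - replace (wronskian F G s / F s ^ 2)
      with (Derive G s * / F s + G s * (- Derive F s / F s ^ 2))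
      by (unfold wronskian; field; lra).
    apply (Derive.is_derive_mult G (fun z => / F z)); [apply smooth_at_is_derive, smooth_G, Hs |].
    apply is_derive_inv; [apply smooth_at_is_derive, smooth_F, Hs | lra].
Qed.

Lemma is_derive_wronskian s : J s -> is_derive (wronskian F G) s 0.
Proof.
  intros Hs. destruct (second_derivatives_proportional s Hs) as [E2F E2G].
  pose proof (smooth_F s Hs) as SF. pose proof (smooth_G s Hs) as SG.
  replace 0 with ((Derive F s * Derive G s + F s * Derive (Derive G) s)
                  - (Derive (Derive F) s * G s + Derive F s * Derive G s))
    by (change (Derive (Derive G) s) with (Derive_n G 2 s);
        change (Derive (Derive F) s) with (Derive_n F 2 s); rewrite E2F, E2G; ring).
  apply (is_derive_minus (fun y => F y * Derive G y));
    apply Derive.is_derive_mult; apply smooth_at_is_derive; auto using smooth_at_Derive.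
Qed.

Lemma wronskian_neq_0 s : J s -> wronskian F G s <> 0.
Proof.
  intros Hs HW.
  assert (HP0 : forall y, J y -> is_derive P y 0).
  { intros y Hy.
    replace 0 with (wronskian F G y / F y ^ 2); [now apply is_derive_P |].
    rewrite (interval_const_of_derive_0 J (wronskian F G) y s), HW; auto using is_derive_wronskian.
    unfold Rdiv. ring. }
  destruct (J_other_point s Hs) as [v [Hv Hvs]].
  apply Hvs, P_inj; auto. now apply (interval_const_of_derive_0 J).
Qed.

Lemma third_derivative X s : (forall y, J y -> smooth_at X y) ->
  (forall y, J y -> Derive_n X 2 y = q y * X y) -> J s ->
  Derive_n X 3 s = Derive q s * X s + q s * Derive X s.
Proof.
  intros SX EX Hs. change (Derive (Derive_n X 2) s = Derive q s * X s + q s * Derive X s).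
  rewrite (Derive_ext_loc _ (fun y => q y * X y)).
  - apply is_derive_unique, Derive.is_derive_mult; apply smooth_at_is_derive; auto using smooth_q.
  - apply filter_imp with (2 := J_open s Hs). exact EX.
Qed.

Lemma fourth_derivative X s : (forall y, J y -> smooth_at X y) ->
  (forall y, J y -> Derive_n X 2 y = q y * X y) -> J s ->
  Derive_n X 4 s = Derive (Derive q) s * X s + 2 * Derive q s * Derive X s + q s * Derive_n X 2 s.
Proof.
  intros SX EX Hs. change (Derive (Derive_n X 3) s =
    Derive (Derive q) s * X s + 2 * Derive q s * Derive X s + q s * Derive (Derive X) s).
  rewrite (Derive_ext_loc _ (fun y => Derive q y * X y + q y * Derive X y)).
  - apply is_derive_unique.
    replace (Derive (Derive q) s * X s + 2 * Derive q s * Derive X s + q s * Derive (Derive X) s)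
      with ((Derive (Derive q) s * X s + Derive q s * Derive X s)
            + (Derive q s * Derive X s + q s * Derive (Derive X) s)) by ring.
    apply (is_derive_plus (fun y => Derive q y * X y));
      apply Derive.is_derive_mult; apply smooth_at_is_derive;
      auto using smooth_at_Derive, smooth_q.
  - apply filter_imp with (2 := J_open s Hs). intros y Hy. now apply third_derivative.
Qed.

Lemma second_order_ode s0 : J s0 -> exists p, (t - 1/2) * p = 0 /\
  forall s, J s -> Derive_n F 2 s = p * F s /\ Derive_n G 2 s = p * G s.
Proof.
  intros Hs0.
  assert (EF : forall s, J s -> Derive_n F 2 s = q s * F s)
    by apply second_derivatives_proportional.
  assert (EG : forall s, J s -> Derive_n G 2 s = q s * G s)
    by apply second_derivatives_proportional.
  destruct (Req_dec t (1/2)) as [Ht | Ht].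
  - assert (Hq' : forall s, J s -> is_derive q s 0).
    { intros s Hs. pose proof (central_moment_relation 4 s Hs) as E.
      rewrite (fourth_derivative F), (fourth_derivative G), EF, EG in E
        by auto using smooth_F, smooth_G.
      enough (Hd : Derive q s = 0) by (rewrite <- Hd; now apply smooth_at_is_derive, smooth_q).
      apply (Rmult_eq_reg_l (-2 * bernoulli_central_moment t 4 * wronskian F G s)).
      + rewrite Rmult_0_r, <- E. unfold wronskian. ring.
      + apply Rmult_integral_contrapositive_currified; [| now apply wronskian_neq_0].
        rewrite Ht. unfold bernoulli_central_moment. simpl. lra. }
    exists (q s0). split; [rewrite Ht; ring |].
    intros s Hs. rewrite EF, EG, (interval_const_of_derive_0 J q s s0); auto.
  - assert (Hq : forall s, J s -> q s = 0).
    { intros s Hs. pose proof (central_moment_relation 3 s Hs) as E.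
      rewrite (third_derivative F), (third_derivative G) in E
        by auto using smooth_F, smooth_G.
      apply (Rmult_eq_reg_l (- bernoulli_central_moment t 3 * wronskian F G s)).
      + rewrite Rmult_0_r, <- E. unfold wronskian. ring.
      + apply Rmult_integral_contrapositive_currified; [| now apply wronskian_neq_0].
        unfold bernoulli_central_moment.
        replace (- (t * (1 - t) ^ 3 + (1 - t) * (- t) ^ 3)) with (- (t * (1 - t) * (1 - 2 * t)))
          by ring.
        apply Ropp_neq_0_compat, Rmult_integral_contrapositive_currified; [nra | lra]. }
    exists 0. split; [ring |].
    intros s Hs. rewrite EF, EG, Hq by exact Hs. split; ring.
Qed.

Lemma reduced_solution s0 : J s0 ->
  exists p, (t - 1/2) * p = 0 /\ pair_equiv_on J (Sp p) (Cp p) F G.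
Proof.
  intros Hs0. destruct (second_order_ode s0 Hs0) as [p [Hp E]].
  destruct (second_order_ode_solution J F p s0) as [a1 [b1 HF]];
    auto using smooth_F; [intros s Hs; apply E, Hs |].
  destruct (second_order_ode_solution J G p s0) as [a2 [b2 HG]];
    auto using smooth_G; [intros s Hs; apply E, Hs |].
  exists p. split; [exact Hp |]. exists a1, b1, a2, b2. split.
  - intros Hdet. apply (wronskian_neq_0 s0 Hs0).
    destruct (HF s0 Hs0) as [F0 F1], (HG s0 Hs0) as [G0 G1].
    unfold wronskian. rewrite F0, F1, G0, G1.
    transitivity ((a1 * b2 - a2 * b1)
                  * (Sp p s0 * (Cp_rate p * Sp p s0) - Sp_rate p * Cp p s0 * Cp p s0)); [ring |].
    rewrite Hdet. ring.
  - intros s Hs. split; [apply HF | apply HG]; exact Hs.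
Qed.

End ReducedEquation.

(** * Back to the interval I *)

Lemma pair_equiv_on_sym I f g u v : pair_equiv_on I f g u v -> pair_equiv_on I u v f g.
Proof.
  intros [a [b [c [d [Hdet E]]]]].
  set (D := a * d - c * b). assert (HD : D <> 0) by (unfold D; lra).
  exists (d / D), (- b / D), (- c / D), (a / D). split.
  - intros Hdet'. apply (Rinv_neq_0_compat _ HD).
    transitivity (d / D * (a / D) - - c / D * (- b / D)); [unfold D in *; field; exact HD | lra].
  - intros x Hx. destruct (E x Hx) as [Eu Ev]. rewrite Eu, Ev.
    unfold D in *. split; field; exact HD.
Qed.

Lemma pair_equiv_on_comp (I J : R -> Prop) (phi f g F G u v : R -> R) :
  (forall x, I x -> J (phi x) /\ f x = F (phi x) /\ g x = G (phi x)) ->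
  pair_equiv_on J F G u v -> pair_equiv_on I f g (fun x => u (phi x)) (fun x => v (phi x)).
Proof.
  intros Hphi [a [b [c [d [Hdet E]]]]]. exists a, b, c, d. split; [exact Hdet |].
  intros x Hx. destruct (Hphi x Hx) as [HJ [Ef Eg]]. rewrite Ef, Eg. exact (E _ HJ).
Qed.

Lemma strict_mono_on_inj (I : R -> Prop) (phi : R -> R) : strict_mono_on I phi ->
  forall x y, I x -> I y -> phi x = phi y -> x = y.
Proof.
  intros Hm x y Hx Hy E. destruct (Rtotal_order x y) as [L | [L | L]]; auto;
    destruct Hm as [Hm | Hm]; [pose proof (Hm x y Hx Hy L) | pose proof (Hm x y Hx Hy L)
                              | pose proof (Hm y x Hy Hx L) | pose proof (Hm y x Hy Hx L)]; lra.
Qed.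

Lemma inv_on_spec (I : R -> Prop) (phi : R -> R) w :
  (exists z, I z /\ phi z = w) -> I (inv_on I phi w) /\ phi (inv_on I phi w) = w.
Proof. apply (epsilon_spec (inhabits 0) (fun z => I z /\ phi z = w)). Qed.

Lemma inv_on_eq (I : R -> Prop) (phi : R -> R) w z : strict_mono_on I phi ->
  I z -> phi z = w -> inv_on I phi w = z.
Proof.
  intros Hm Hz Ez. destruct (inv_on_spec I phi w) as [A B]; [now exists z |].
  apply (strict_mono_on_inj I phi Hm); auto. congruence.
Qed.

Lemma in_I_interval a b : is_interval (in_I a b).
Proof.
  intros x y z [Hx1 Hx2] [Hy1 Hy2] Hz. split.
  - apply Rbar_lt_le_trans with x; auto. simpl; lra.
  - apply Rbar_le_lt_trans with y; auto. simpl; lra.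
Qed.

Lemma in_I_open a b : open (in_I a b).
Proof. apply open_and; [apply open_Rbar_gt | apply open_Rbar_lt]. Qed.

Lemma in_I_inhabited a b : Rbar_lt a b -> exists x, in_I a b x.
Proof.
  intros H. unfold in_I.
  destruct a as [a0 | |]; destruct b as [b0 | |]; simpl in H; try contradiction.
  - exists ((a0 + b0) / 2). simpl. split; lra.
  - exists (a0 + 1). simpl. split; auto; lra.
  - exists (b0 - 1). simpl. split; auto; lra.
  - exists 0. simpl. split; auto.
Qed.

Lemma segment_IVT (phi : R -> R) x y w : x <= y ->
  (forall z, x <= z <= y -> continuity_pt phi z) ->
  Rmin (phi x) (phi y) <= w <= Rmax (phi x) (phi y) -> exists z, x <= z <= y /\ phi z = w.
Proof.
  intros Hxy Hc Hw.
  destruct (Req_dec (phi x) w) as [Ex | Ex]; [exists x; split; [lra | exact Ex] |].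
  destruct (Req_dec (phi y) w) as [Ey | Ey]; [exists y; split; [lra | exact Ey] |].
  set (sg := if Rle_dec (phi x) (phi y) then 1 else -1).
  assert (Hsg : sg <> 0 /\ sg * (phi x - w) < 0 < sg * (phi y - w)).
  { unfold sg. destruct (Rle_dec (phi x) (phi y)).
    - rewrite Rmin_left, Rmax_right in Hw by lra. repeat split; lra.
    - rewrite Rmin_right, Rmax_left in Hw by lra. repeat split; lra. }
  destruct Hsg as [Hsg [Hneg Hpos]].
  destruct (Ranalysis5.IVT_interv (fun z => sg * (phi z - w)) x y) as [z [Hz Ez]]; auto.
  - intros z Hz. apply continuity_pt_scal, continuity_pt_minus; auto.
    apply continuity_pt_const. intros u v; reflexivity.
  - destruct (Req_dec x y) as [<- | ]; [lra | lra].
  - exists z. split; [exact Hz |]. apply Rmult_integral in Ez. lra.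
Qed.

Lemma interval_IVT (I : R -> Prop) (phi : R -> R) x y w : is_interval I ->
  (forall z, I z -> continuity_pt phi z) -> I x -> I y ->
  Rmin (phi x) (phi y) <= w <= Rmax (phi x) (phi y) ->
  exists z, I z /\ Rmin x y <= z <= Rmax x y /\ phi z = w.
Proof.
  intros HI Hc Hx Hy Hw.
  assert (Hseg : forall u v, u <= v -> I u -> I v ->
            Rmin (phi u) (phi v) <= w <= Rmax (phi u) (phi v) ->
            exists z, I z /\ u <= z <= v /\ phi z = w).
  { intros u v Huv Hu Hv Huvw. destruct (segment_IVT phi u v w) as [z [Hz Ez]]; auto.
    - intros z Hz. apply Hc, (HI u v); auto.
    - exists z. repeat split; auto; try lra. apply (HI u v); auto. }
  destruct (Rle_dec x y).
  - rewrite Rmin_left, Rmax_right by lra. apply Hseg; auto; lra.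
  - rewrite Rmin_right, Rmax_left by lra. rewrite Rmin_comm, Rmax_comm in Hw. apply Hseg; auto; lra.
Qed.

Section ContinuousStrictlyMonotone.

Variables (I : R -> Prop) (phi : R -> R).
Hypothesis I_open : open I.
Hypothesis I_interval : is_interval I.
Hypothesis phi_cont : forall x, I x -> continuity_pt phi x.
Hypothesis phi_mono : strict_mono_on I phi.

Lemma local_surjectivity x0 eps : I x0 -> 0 < eps -> exists r, 0 < r /\
  forall y, Rabs (y - phi x0) < r -> exists z, I z /\ Rabs (z - x0) <= eps /\ phi z = y.
Proof.
  intros Hx0 Heps. destruct (I_open x0 Hx0) as [e0 He0]. pose proof (cond_pos e0).
  set (e := Rmin eps (e0 / 2)).
  assert (He : 0 < e <= eps /\ e < e0)
    by (unfold e; pose proof (Rmin_l eps (e0 / 2)); pose proof (Rmin_r eps (e0 / 2));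
        repeat split; try lra; apply Rmin_pos; lra).
  assert (Hl : I (x0 - e))
    by (apply He0; change (Rabs (x0 - e - x0) < e0); rewrite Rabs_left; lra).
  assert (Hr : I (x0 + e))
    by (apply He0; change (Rabs (x0 + e - x0) < e0); rewrite Rabs_right; lra).
  set (m := Rmin (phi (x0 - e)) (phi (x0 + e))). set (M := Rmax (phi (x0 - e)) (phi (x0 + e))).
  assert (HmM : m < phi x0 < M).
  { unfold m, M. destruct phi_mono as [Hm | Hm];
      pose proof (Hm (x0 - e) x0 Hl Hx0 ltac:(lra)); pose proof (Hm x0 (x0 + e) Hx0 Hr ltac:(lra)).
    - rewrite Rmin_left, Rmax_right by lra. lra.
    - rewrite Rmin_right, Rmax_left by lra. lra. }
  exists (Rmin (phi x0 - m) (M - phi x0)). split; [apply Rmin_pos; lra |].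
  intros y Hy. apply Rabs_def2 in Hy.
  pose proof (Rmin_l (phi x0 - m) (M - phi x0)). pose proof (Rmin_r (phi x0 - m) (M - phi x0)).
  destruct (interval_IVT I phi (x0 - e) (x0 + e) y) as [z [Hz [Hze Ez]]]; auto; [fold m M; lra |].
  exists z. repeat split; auto.
  rewrite Rmin_left, Rmax_right in Hze by lra. apply Rabs_le. lra.
Qed.

Lemma image_open : open (fun s => exists x, I x /\ phi x = s).
Proof.
  intros s [x0 [Hx0 <-]]. destruct (local_surjectivity x0 1 Hx0 ltac:(lra)) as [r [Hr Hsurj]].
  exists (mkposreal r Hr). intros y Hy.
  destruct (Hsurj y Hy) as [z [Hz [_ Ez]]]. now exists z.
Qed.

Lemma image_interval : is_interval (fun s => exists x, I x /\ phi x = s).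
Proof.
  intros u v w [x [Hx <-]] [y [Hy <-]] Hw.
  destruct (interval_IVT I phi x y w) as [z [Hz [_ Ez]]]; auto.
  - split; [apply Rle_trans with (phi x) | apply Rle_trans with (phi y)];
      auto using Rmin_l, Rmax_r; lra.
  - now exists z.
Qed.

Lemma continuity_pt_inv_on x0 : I x0 -> continuity_pt (inv_on I phi) (phi x0).
Proof.
  intros Hx0. apply continuity_pt_locally. intros eps.
  destruct (local_surjectivity x0 (eps / 2) Hx0 ltac:(destruct eps; simpl; lra)) as [r [Hr Hsurj]].
  exists (mkposreal r Hr). intros y Hy. destruct (Hsurj y Hy) as [z [Hz [Hzx Ez]]].
  rewrite (inv_on_eq I phi y z), (inv_on_eq I phi (phi x0) x0); auto.
  pose proof (cond_pos eps). lra.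
Qed.

End ContinuousStrictlyMonotone.

Lemma weighted_ratio_between A B p1 p2 : 0 < A -> 0 < B ->
  Rmin p1 p2 <= (A * p1 + B * p2) / (A + B) <= Rmax p1 p2.
Proof.
  intros HA HB. set (r := (A * p1 + B * p2) / (A + B)).
  assert (Hr : r * (A + B) = A * p1 + B * p2) by (unfold r; field; lra).
  destruct (Rle_dec p1 p2).
  - rewrite Rmin_left, Rmax_right by lra. split; apply (Rmult_le_reg_r (A + B)); nra.
  - rewrite Rmin_right, Rmax_left by lra. split; apply (Rmult_le_reg_r (A + B)); nra.
Qed.

Lemma equiv_cross_identity (I : R -> Prop) t p (f g h : R -> R) x y z : (t - 1/2) * p = 0 ->
  pair_equiv_on I f g (fun x => Sp p (h x)) (fun x => Cp p (h x)) ->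
  I x -> I y -> I z -> h z = t * h x + (1 - t) * h y ->
  g z * (t * f x + (1 - t) * f y) = f z * (t * g x + (1 - t) * g y).
Proof.
  intros Hp [al [be [ga [de [Hdet E]]]]] Hx Hy Hz Ehz.
  pose proof (weighted_pair_Sp t p (h x - h y) Hp) as K. unfold weighted_pair in K.
  replace ((1 - t) * (h x - h y) + 0) with (h x - h z) in K by (rewrite Ehz; ring).
  replace (- t * (h x - h y) + 0) with (h y - h z) in K by (rewrite Ehz; ring).
  rewrite !Sp_minus in K.
  destruct (E x Hx) as [Sx Cx], (E y Hy) as [Sy Cy], (E z Hz) as [Sz Cz].
  rewrite Sx, Cx, Sy, Cy, Sz, Cz in K.
  assert (K' : (al * de - ga * be)
               * (g z * (t * f x + (1 - t) * f y) - f z * (t * g x + (1 - t) * g y)) = 0)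
    by (rewrite <- K; ring).
  apply Rmult_integral in K'. destruct K' as [K' | K']; [exfalso; apply Hdet; lra | lra].
Qed.

Section Reduction.

Variables (a b : Rbar) (t : R) (f g h : R -> R).
Hypothesis t_range : 0 < t < 1.
Hypothesis f_pos : forall x, in_I a b x -> 0 < f x.
Hypothesis ratio_cont : continuous_on_set (in_I a b) (fun x => g x / f x).
Hypothesis ratio_mono : strict_mono_on (in_I a b) (fun x => g x / f x).
Hypothesis h_cont : continuous_on_set (in_I a b) h.
Hypothesis h_mono : strict_mono_on (in_I a b) h.

Local Notation I := (in_I a b).
Local Notation phi := (fun x => g x / f x).
Local Notation hinv := (inv_on (in_I a b) h).
Local Notation J := (fun s => exists x, in_I a b x /\ h x = s).

Lemma hinv_h x : I x -> hinv (h x) = x.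
Proof. intros Hx. now apply inv_on_eq. Qed.

Lemma hinv_spec s : J s -> I (hinv s) /\ h (hinv s) = s.
Proof. apply inv_on_spec. Qed.

Lemma mean_eq_on_image :
  (forall x y, I x -> I y ->
     inv_on I phi ((t * g x + (1 - t) * g y) / (t * f x + (1 - t) * f y))
     = hinv (t * h x + (1 - t) * h y)) ->
  forall u v, J u -> J v ->
    t * g (hinv u) + (1 - t) * g (hinv v)
    = phi (hinv (t * u + (1 - t) * v)) * (t * f (hinv u) + (1 - t) * f (hinv v)).
Proof.
  intros Hid u v Hu Hv.
  destruct (hinv_spec u Hu) as [Hx Ex], (hinv_spec v Hv) as [Hy Ey].
  set (x := hinv u) in *. set (y := hinv v) in *.
  pose proof (f_pos x Hx). pose proof (f_pos y Hy).
  set (r := (t * g x + (1 - t) * g y) / (t * f x + (1 - t) * f y)).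
  assert (Hr : exists z, I z /\ phi z = r).
  { destruct (interval_IVT I phi x y r (in_I_interval a b) ratio_cont Hx Hy) as [z [Hz [_ Ez]]].
    - replace r with ((t * f x * (g x / f x) + (1 - t) * f y * (g y / f y))
                      / (t * f x + (1 - t) * f y)) by (unfold r; field; repeat split; nra).
      apply weighted_ratio_between; nra.
    - now exists z. }
  rewrite <- Ex, <- Ey, <- (Hid x y Hx Hy). fold r.
  rewrite (proj2 (inv_on_spec I phi r Hr)). unfold r. field. nra.
Qed.

Lemma solution_of_mean_identity : Rbar_lt a b ->
  (forall x y, I x -> I y ->
     inv_on I phi ((t * g x + (1 - t) * g y) / (t * f x + (1 - t) * f y))
     = hinv (t * h x + (1 - t) * h y)) ->
  exists p, (t - 1/2) * p = 0 /\
    pair_equiv_on I f g (fun x => Sp p (h x)) (fun x => Cp p (h x)).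
Proof.
  intros Hab Hid. destruct (in_I_inhabited a b Hab) as [x0 Hx0].
  assert (Hred : exists p, (t - 1/2) * p = 0 /\
                   pair_equiv_on J (Sp p) (Cp p) (fun s => f (hinv s)) (fun s => g (hinv s))).
  { apply (reduced_solution J t _ _ (fun s => phi (hinv s))) with (s0 := h x0);
      [.. | now exists x0].
    - exact (image_open I h (in_I_open a b) (in_I_interval a b) h_cont h_mono).
    - exact (image_interval I h (in_I_interval a b) h_cont).
    - exact t_range.
    - intros s Hs. apply f_pos, hinv_spec, Hs.
    - intros s Hs. pose proof (f_pos _ (proj1 (hinv_spec s Hs))). field. lra.
    - intros s [x [Hx <-]]. apply (continuity_pt_comp hinv phi).
      + exact (continuity_pt_inv_on I h (in_I_open a b) (in_I_interval a b) h_cont h_mono x Hx).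
      + rewrite hinv_h by exact Hx. now apply ratio_cont.
    - intros u v Hu Hv E.
      destruct (hinv_spec u Hu) as [Hx <-], (hinv_spec v Hv) as [Hy <-].
      f_equal. exact (strict_mono_on_inj I phi ratio_mono _ _ Hx Hy E).
    - now apply mean_eq_on_image. }
  destruct Hred as [p [Hp Hequiv]]. exists p. split; [exact Hp |].
  apply (pair_equiv_on_comp I J h f g (fun s => f (hinv s)) (fun s => g (hinv s)));
    [| now apply pair_equiv_on_sym].
  intros x Hx. rewrite hinv_h by exact Hx. repeat split. now exists x.
Qed.

Lemma mean_identity_of_solution p : (t - 1/2) * p = 0 ->
  pair_equiv_on I f g (fun x => Sp p (h x)) (fun x => Cp p (h x)) ->
  forall x y, I x -> I y ->
    inv_on I phi ((t * g x + (1 - t) * g y) / (t * f x + (1 - t) * f y))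
    = hinv (t * h x + (1 - t) * h y).
Proof.
  intros Hp Hequiv x y Hx Hy.
  destruct (interval_IVT I h x y (t * h x + (1 - t) * h y) (in_I_interval a b) h_cont Hx Hy)
    as [z [Hz [_ Ez]]].
  { apply mean_between; lra. }
  rewrite (inv_on_eq I h _ z h_mono Hz Ez).
  apply inv_on_eq; auto.
  pose proof (f_pos x Hx). pose proof (f_pos y Hy). pose proof (f_pos z Hz).
  pose proof (equiv_cross_identity I t p f g h x y z Hp Hequiv Hx Hy Hz Ez) as K.
  assert (Hden : 0 < t * f x + (1 - t) * f y) by nra.
  apply (Rmult_eq_reg_r (f z * (t * f x + (1 - t) * f y))); [| apply Rgt_not_eq; nra].
  transitivity (g z * (t * f x + (1 - t) * f y)); [field; lra |].
  rewrite K. field. lra.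
Qed.

End Reduction.

Theorem corollary3p2 (a b : Rbar) (t : R) (f g h : R -> R) :
  Rbar_lt a b ->
  0 < t < 1 ->
  (forall x, in_I a b x -> 0 < f x) ->
  continuous_on_set (in_I a b) (fun x => g x / f x) ->
  strict_mono_on (in_I a b) (fun x => g x / f x) ->
  continuous_on_set (in_I a b) h ->
  strict_mono_on (in_I a b) h ->
  ((forall x y, in_I a b x -> in_I a b y ->
      inv_on (in_I a b) (fun z => g z / f z)
        ((t * g x + (1 - t) * g y) / (t * f x + (1 - t) * f y))
      = inv_on (in_I a b) h (t * h x + (1 - t) * h y))
   <->
   exists p : R, (t - 1/2) * p = 0 /\
     pair_equiv_on (in_I a b) f g (fun x => Sp p (h x)) (fun x => Cp p (h x))).
Proof.
  intros Hab Ht Hf Hc Hm Hhc Hhm. split.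
  - now apply solution_of_mean_identity.
  - intros [p [Hp Hequiv]]. now apply (mean_identity_of_solution a b t f g h) with p.
Qed.
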